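(* The Minimax SCC $M$ coincides with the Copeland SCC $Cop$ (as functions on $\mathcal P$) if and only if $n=2$ or $(h,n)=(3,3)$.
   Context: Let $n,h\ge2$, $N=\{1,\dots,n\}$, $H=\{1,\dots,h\}$; $\mathcal P$ is the set of $h$-tuples $p$ of linear orders on $N$; $x>_{p_i}y$ means $x\neq y$ and $p_i$ ranks $x$ above $y$. Let $\mu_0=\lceil(h+1)/2\rceil$ and $x>^p_{\mu_0}y$ mean $|\{i: x>_{p_i}y\}|\ge\mu_0$. $M(p)=\mathrm{argmin}_{x\in N}\max_{y\neq x}|\{i: y>_{p_i}x\}|$ and $Cop(p)=\mathrm{argmax}_{x\in N}\big(|\{y: x>^p_{\mu_0}y\}|-|\{y: y>^p_{\mu_0}x\}|\big)$. *)

From mathcomp Require Import all_boot all_order all_algebra all_fingroup.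
Set Implicit Arguments. Unset Strict Implicit. Unset Printing Implicit Defensive.
Import GRing.Theory Num.Theory.

(* A linear order on N = 'I_n is encoded by its rank permutation
   r : {perm 'I_n} (r x = position of x, 0 = top);
   x is ranked strictly above y iff r x < r y.  This is a bijection
   between linear orders on N and {perm 'I_n}. *)
Definition above (n : nat) (r : {perm 'I_n}) (x y : 'I_n) : bool := r x < r y.

Definition profile (n h : nat) := 'I_h -> {perm 'I_n}.

Definition nvotes (n h : nat) (p : profile n h) (x y : 'I_n) : nat :=
  #|[set i : 'I_h | above (p i) x y]|.

(* mu0 = ceil((h+1)/2) *)
Definition mu0 (h : nat) : nat := (h.+2)./2.

Definition maj (n h : nat) (p : profile n h) (x y : 'I_n) : bool :=
  mu0 h <= nvotes p x y.

Definition minimax_score (n h : nat) (p : profile n h) (x : 'I_n) : nat :=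
  \max_(y : 'I_n | y != x) nvotes p y x.

Definition Minimax (n h : nat) (p : profile n h) : {set 'I_n} :=
  [set x | [forall z, minimax_score p x <= minimax_score p z]].

Definition copeland_score (n h : nat) (p : profile n h) (x : 'I_n) : int :=
  (#|[set y | maj p x y]|%:Z - #|[set y | maj p y x]|%:Z)%R.

Definition Copeland (n h : nat) (p : profile n h) : {set 'I_n} :=
  [set x | [forall z, (copeland_score p z <= copeland_score p x)%R]].

From mathcomp Require Import all_boot all_order all_algebra all_fingroup.
From mathcomp Require Import zify.
Set Implicit Arguments. Unset Strict Implicit. Unset Printing Implicit Defensive.
Import Order.TTheory GRing.Theory Num.Theory.

(* For n = 2 both rules elect the alternatives that at least half of the
   voters prefer to the other one.  For n = h = 3 the profile enters only
   through three pairwise counts, subject to triangle inequalities, which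
   leaves finitely many cases.  Otherwise put 0, 1, 2 (or 0, .., 3) on top of
   every ballot in cyclically shifted orders, with the same order below:
   - h = 2k: k ballots 0>1>2 and k ballots 1>2>0.  Then 0 ties with 1 and 2
     while 1 beats 2, so Copeland rejects 0, yet the worst defeat of 0 (k
     votes) is minimal;
   - h = 2k+1 >= 5: add the ballot 2>0>1.  Now 0, 1, 2 form a majority cycle,
     so Copeland elects 2, but 2 loses to 1 by 2k votes and 0 only by k+1;
   - h = 3, n >= 4: ballots 0>1>2>3, 1>2>3>0, 2>3>0>1.  The worst defeat of 0
     (2 votes) is minimal, but 0 loses twice and 1 only once. *)

Lemma nvotes_self n h (p : profile n h) x : nvotes p x x = 0.
Proof. by apply: eq_card0 => i; rewrite !inE /above ltnn. Qed.

Lemma nvotes_sym n h (p : profile n h) x y : x != y -> nvotes p x y + nvotes p y x = h.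
Proof.
move=> xy; rewrite /nvotes -[RHS]card_ord -(cardsC [set i | above (p i) x y]).
congr (_ + _); apply: eq_card => i; rewrite !inE /above ltnNge leq_eqVlt.
by rewrite val_eqE (inj_eq (@perm_inj _ (p i))) (negbTE xy).
Qed.

Lemma nvotes_triangle n h (p : profile n h) x y z :
  nvotes p x y + nvotes p y z <= h + nvotes p x z.
Proof.
rewrite /nvotes -cardsUI leq_add //; first by rewrite -[X in _ <= X](card_ord h) max_card.
apply: subset_leq_card; apply/subsetP => i.
by rewrite !inE /above => /andP[]; apply: ltn_trans.
Qed.

Lemma maj_nvotes n h (p : profile n h) x y :
  x != y -> maj p x y = (nvotes p y x < nvotes p x y).
Proof. by move=> xy; have := nvotes_sym p xy; rewrite /maj /mu0 -divn2; lia. Qed.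

Lemma mu0_le h : 0 < h -> mu0 h <= h.
Proof. by rewrite /mu0 -divn2; lia. Qed.

Lemma minimax_score_le n h (p : profile n h) x B :
  (forall y, y != x -> nvotes p y x <= B) -> minimax_score p x <= B.
Proof. by move/bigmax_leqP. Qed.

Lemma leq_minimax_score n h (p : profile n h) x y :
  y != x -> nvotes p y x <= minimax_score p x.
Proof. exact: (@leq_bigmax_cond _ _ (fun y => nvotes p y x)). Qed.

Section Enumeration.

Variables (T : finType) (s : seq T).
Hypothesis enumT_s : enum T = s.

Lemma forall_enum (P : pred T) : [forall x, P x] = all P s.
Proof.
rewrite -enumT_s; apply/forallP/allP => [Px x _ | Px x]; first exact: Px.
by apply: Px; rewrite mem_enum.
Qed.

Lemma card_set_enum (P : pred T) : #|[set x | P x]| = count P s.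
Proof. by rewrite -enumT_s cardsE cardE {1}/enum_mem size_filter -enumT. Qed.

Lemma bigmax_enum (P : pred T) (F : T -> nat) :
  \max_(x | P x) F x = \max_(x <- s | P x) F x.
Proof. by rewrite -enumT_s big_enum_cond. Qed.

Lemma mem_enum_eq x : x \in s.
Proof. by rewrite -enumT_s mem_enum. Qed.

End Enumeration.

Definition ord2_0 : 'I_2 := Ordinal (isT : 0 < 2).
Definition ord2_1 : 'I_2 := Ordinal (isT : 1 < 2).

Lemma enum_ord2 : enum 'I_2 = [:: ord2_0; ord2_1].
Proof. by apply: (inj_map val_inj); rewrite val_enum_ord. Qed.

Definition ord3_0 : 'I_3 := Ordinal (isT : 0 < 3).
Definition ord3_1 : 'I_3 := Ordinal (isT : 1 < 3).
Definition ord3_2 : 'I_3 := Ordinal (isT : 2 < 3).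

Lemma enum_ord3 : enum 'I_3 = [:: ord3_0; ord3_1; ord3_2].
Proof. by apply: (inj_map val_inj); rewrite val_enum_ord. Qed.

Lemma Minimax_eq_Copeland_two h (p : profile 2 h) : Minimax p = Copeland p.
Proof.
have E := enum_ord2.
apply/setP => x; rewrite !inE !(forall_enum E) /= /copeland_score.
rewrite !(card_set_enum E) /minimax_score !(bigmax_enum E) /=.
have := mem_enum_eq E x; rewrite !inE => /orP[]/eqP->; rewrite !big_cons !big_nil /=.
all: rewrite ![maj _ ord2_0 ord2_1]maj_nvotes ?[maj _ ord2_1 ord2_0]maj_nvotes //.
all: rewrite /maj !nvotes_self !maxn0 /mu0 /=.
all: move: (nvotes p ord2_0 ord2_1) (nvotes p ord2_1 ord2_0) => a b.
all: by case: ltngtP; rewrite ?leqnn.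
Qed.

Lemma Minimax_eq_Copeland_three (p : profile 3 3) : Minimax p = Copeland p.
Proof.
have E := enum_ord3.
have s01 := nvotes_sym p (x := ord3_0) (y := ord3_1) isT.
have s02 := nvotes_sym p (x := ord3_0) (y := ord3_2) isT.
have s12 := nvotes_sym p (x := ord3_1) (y := ord3_2) isT.
have t012 := nvotes_triangle p ord3_0 ord3_1 ord3_2.
have t021 := nvotes_triangle p ord3_0 ord3_2 ord3_1.
have t102 := nvotes_triangle p ord3_1 ord3_0 ord3_2.
have t120 := nvotes_triangle p ord3_1 ord3_2 ord3_0.
have t201 := nvotes_triangle p ord3_2 ord3_0 ord3_1.
have t210 := nvotes_triangle p ord3_2 ord3_1 ord3_0.
apply/setP => x; rewrite !inE !(forall_enum E) /= /copeland_score /maj.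
rewrite !(card_set_enum E) /minimax_score !(bigmax_enum E) /=.
have := mem_enum_eq E x; rewrite !inE => /or3P[]/eqP->.
all: rewrite !big_cons !big_nil /= !nvotes_self.
all: move: (nvotes p ord3_0 ord3_1) (nvotes p ord3_1 ord3_0) (nvotes p ord3_0 ord3_2)
  (nvotes p ord3_2 ord3_0) (nvotes p ord3_1 ord3_2) (nvotes p ord3_2 ord3_1)
  s01 s02 s12 t012 t021 t102 t120 t201 t210 => a b c d e f s01 s02 s12.
all: have -> : b = 3 - a by lia.
all: have -> : d = 3 - c by lia.
all: have -> : f = 3 - e by lia.
all: have : a <= 3 by lia.
all: have : c <= 3 by lia.
all: have : e <= 3 by lia.
all: clear; case: e => [|[|[|[|e]]]] // _; case: c => [|[|[|[|c]]]] // _.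
all: by case: a => [|[|[|[|a]]]].
Qed.

(* The ballot with shift t: the alternatives below K are rotated cyclically by
   t on top, the others keep their place below them. *)
Definition rot_rank (K t x : nat) : nat := if x < K then (x + t) %% K else x.

Lemma rot_rank_top K t x : x < K -> rot_rank K t x < K.
Proof. by move=> xK; rewrite /rot_rank xK ltn_mod; lia. Qed.

Lemma rot_rank_bot K t x : K <= x -> rot_rank K t x = x.
Proof. by rewrite /rot_rank ltnNge => ->. Qed.

Lemma rot_rank_inj K t : injective (rot_rank K t).
Proof.
move=> x y; case: (ltnP x K) => xK; case: (ltnP y K) => yK.
- by rewrite /rot_rank xK yK => /eqP; rewrite eqn_modDr !modn_small // => /eqP.
- by rewrite (rot_rank_bot _ yK) => e; move: (rot_rank_top t xK); rewrite e ltnNge yK.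
- by rewrite (rot_rank_bot _ xK) => e; move: (rot_rank_top t yK); rewrite -e ltnNge xK.
- by rewrite !rot_rank_bot.
Qed.

(* The guard makes [rot_fun] total: it is the identity when K > n. *)
Definition rot_fun n K t (x : 'I_n) : 'I_n :=
  if K <= n then insubd x (rot_rank K t x) else x.

Lemma val_rot_fun n K t (x : 'I_n) : K <= n -> val (rot_fun K t x) = rot_rank K t x.
Proof.
move=> Kn; rewrite /rot_fun Kn val_insubd.
have [xK|Kx] := ltnP x K; last by rewrite rot_rank_bot ?ltn_ord.
by rewrite (leq_trans (rot_rank_top t xK) Kn).
Qed.

Lemma rot_fun_inj n K t : injective (@rot_fun n K t).
Proof.
case: (leqP K n) => Kn x y; last by rewrite /rot_fun leqNgt Kn.
by move/(congr1 val); rewrite !val_rot_fun // => /rot_rank_inj /val_inj.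
Qed.

Definition rot_perm {n} K t : {perm 'I_n} := perm (@rot_fun_inj n K t).

Definition rot_profile {n h} K (ts : seq nat) : profile n h :=
  fun i => rot_perm K (nth 0 ts i).

Definition rot_votes K (ts : seq nat) (x y : nat) : nat :=
  count (fun t => rot_rank K t x < rot_rank K t y) ts.

Definition rot_beats h K ts x y : bool := mu0 h <= rot_votes K ts x y.

Lemma rot_votes_cat K s1 s2 x y :
  rot_votes K (s1 ++ s2) x y = rot_votes K s1 x y + rot_votes K s2 x y.
Proof. exact: count_cat. Qed.

Lemma rot_votes_nseq K k t x y :
  rot_votes K (nseq k t) x y = (rot_rank K t x < rot_rank K t y) * k.
Proof. exact: count_nseq. Qed.

Lemma rot_votes_top_bot K ts x y : x < K <= y -> rot_votes K ts x y = size ts.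
Proof.
case/andP=> xK Ky; rewrite -count_predT; apply: eq_count => t /=.
by rewrite (rot_rank_bot _ Ky) (leq_trans (rot_rank_top t xK)).
Qed.

Lemma rot_votes_bot_top K ts x y : x < K <= y -> rot_votes K ts y x = 0.
Proof.
case/andP=> xK Ky; rewrite -(count_pred0 ts); apply: eq_count => t /=.
by rewrite rot_rank_bot // ltnNge ltnW // (leq_trans (rot_rank_top t xK)).
Qed.

Lemma card_set_ord n (P : pred nat) : #|[set x : 'I_n | P x]| = count P (iota 0 n).
Proof. by rewrite (card_set_enum (erefl _)) -val_enum_ord count_map. Qed.

Lemma card_set_nth h (ts : seq nat) (P : pred nat) : size ts = h ->
  #|[set i : 'I_h | P (nth 0 ts i)]| = count P ts.
Proof.
move=> <-; rewrite (card_set_ord _ (preim (nth 0 ts) P)) -count_map.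
by rewrite -/(mkseq _ _) mkseq_nth.
Qed.

Section RotationProfile.

Variables (n h K : nat) (ts : seq nat).
Hypotheses (Kn : K <= n) (size_ts : size ts = h).

Let p : profile n h := rot_profile K ts.

Lemma nvotes_rot_profile x y : nvotes p x y = rot_votes K ts x y.
Proof.
rewrite /nvotes /rot_votes.
rewrite -(card_set_nth (fun t => rot_rank K t x < rot_rank K t y) size_ts).
by apply: eq_card => i; rewrite !inE /above !permE /= !val_rot_fun.
Qed.

Lemma copeland_score_rot_profile x :
  copeland_score p x = ((count (rot_beats h K ts x) (iota 0 n))%:Z
                        - (count (rot_beats h K ts ^~ x) (iota 0 n))%:Z)%R.
Proof.
rewrite /copeland_score /maj.
rewrite -(card_set_ord _ (rot_beats h K ts x)) -(card_set_ord _ (rot_beats h K ts ^~ x)).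
by congr (_%:Z - _%:Z)%R; apply: eq_card => y; rewrite !inE nvotes_rot_profile.
Qed.

Lemma iota_top_bot : iota 0 n = iota 0 K ++ iota K (n - K).
Proof. by rewrite -iotaD subnKC. Qed.

Lemma copeland_score_rot_top (x : 'I_n) : 0 < h -> x < K ->
  copeland_score p x = ((n - K + count (rot_beats h K ts x) (iota 0 K))%:Z
                        - (count (rot_beats h K ts ^~ x) (iota 0 K))%:Z)%R.
Proof.
move=> h0 xK; rewrite copeland_score_rot_profile iota_top_bot !count_cat.
have -> : count (rot_beats h K ts x) (iota K (n - K)) = n - K.
  rewrite -[RHS](size_iota K) -count_predT; apply: eq_in_count => y.
  rewrite mem_iota => /andP[Ky _].
  by rewrite /rot_beats rot_votes_top_bot ?xK // size_ts mu0_le.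
have -> : count (rot_beats h K ts ^~ x) (iota K (n - K)) = 0.
  rewrite -[RHS](count_pred0 (iota K (n - K))); apply: eq_in_count => y.
  by rewrite mem_iota => /andP[Ky _]; rewrite /rot_beats rot_votes_bot_top ?xK.
by rewrite addn0 addnC.
Qed.

Lemma copeland_score_rot_bot (z : 'I_n) : 0 < h -> K <= z ->
  (copeland_score p z <= (n - K)%:Z - K%:Z)%R.
Proof.
move=> h0 Kz; rewrite copeland_score_rot_profile iota_top_bot !count_cat.
have -> : count (rot_beats h K ts z) (iota 0 K) = 0.
  rewrite -[RHS](count_pred0 (iota 0 K)); apply: eq_in_count => y.
  by rewrite mem_iota => /andP[_ yK]; rewrite /rot_beats rot_votes_bot_top ?yK.
have -> : count (rot_beats h K ts ^~ z) (iota 0 K) = K.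
  rewrite -[RHS](size_iota 0) -count_predT; apply: eq_in_count => y.
  rewrite mem_iota => /andP[_ yK].
  by rewrite /rot_beats rot_votes_top_bot ?yK // size_ts mu0_le.
have := count_size (rot_beats h K ts z) (iota K (n - K)); rewrite size_iota; lia.
Qed.

Lemma minimax_score_rot_top (x : 'I_n) B : x < K ->
  (forall y, y < K -> y != x :> nat -> rot_votes K ts y x <= B) -> minimax_score p x <= B.
Proof.
move=> xK leB; apply: minimax_score_le => y yx; rewrite nvotes_rot_profile.
have [yK|Ky] := ltnP y K; first exact: leB.
by rewrite rot_votes_bot_top ?xK.
Qed.

Lemma rot_votes_le_minimax_score (x y : 'I_n) :
  y != x -> rot_votes K ts y x <= minimax_score p x.
Proof. by rewrite -nvotes_rot_profile; apply: leq_minimax_score. Qed.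

Lemma minimax_score_rot_bot (z : 'I_n) : 0 < K -> K <= z -> h <= minimax_score p z.
Proof.
move=> K0 Kz; have y0 : 0 < n by apply: leq_trans Kn.
apply: leq_trans (leq_minimax_score p (y := Ordinal y0) _); last first.
  by apply/eqP => /(congr1 val) /= z0; move: Kz; rewrite -z0 leqNgt K0.
by rewrite nvotes_rot_profile rot_votes_top_bot ?size_ts ?K0.
Qed.

End RotationProfile.

Lemma Minimax_neq_Copeland_even n h : 3 <= n -> 0 < h -> ~~ odd h ->
  exists p : profile n h, Minimax p != Copeland p.
Proof.
move=> n3 h0 evh; set k := h./2.
have hk : h = k + k by rewrite -{1}(odd_double_half h) (negbTE evh) addnn.
set ts := nseq k 0 ++ nseq k 2.
have size_ts : size ts = h by rewrite size_cat !size_nseq.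
have votes x y : rot_votes 3 ts x y =
    (rot_rank 3 0 x < rot_rank 3 0 y) * k + (rot_rank 3 2 x < rot_rank 3 2 y) * k.
  by rewrite rot_votes_cat !rot_votes_nseq.
exists (rot_profile 3 ts); set p : profile n h := rot_profile 3 ts.
pose a0 : 'I_n := Ordinal (leq_trans (isT : 0 < 3) n3).
pose a1 : 'I_n := Ordinal (leq_trans (isT : 1 < 3) n3).
apply/negP => /eqP eqMC.
have : a0 \in Minimax p.
  rewrite inE; apply/forallP => z.
  have [->//|za0] := eqVneq z a0.
  apply: leq_trans (_ : minimax_score p a0 <= k) _.
    by apply: minimax_score_rot_top => // -[|[|[|y]]] //= _ _; rewrite votes /=; lia.
  case: z za0 => -[|[|[|z]]] zn //= _.
  - apply: leq_trans _ (rot_votes_le_minimax_score n3 size_ts (y := a0) _) => //.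
    by rewrite votes /=; lia.
  - apply: leq_trans _ (rot_votes_le_minimax_score n3 size_ts (y := a1) _) => //.
    by rewrite votes /=; lia.
  - by apply: leq_trans (_ : k <= h) (minimax_score_rot_bot n3 size_ts _ _) => //; lia.
rewrite eqMC inE => /forallP /(_ a1).
by rewrite !copeland_score_rot_top //= /rot_beats !votes /= -/k; lia.
Qed.

Lemma Minimax_neq_Copeland_odd n h : 3 <= n -> 5 <= h -> odd h ->
  exists p : profile n h, Minimax p != Copeland p.
Proof.
move=> n3 h5 odh; set k := h./2; have h0 : 0 < h by lia.
have hk : h = k + k + 1 by rewrite -{1}(odd_double_half h) odh addnn addnC.
set ts := nseq k 0 ++ nseq k 2 ++ [:: 1].
have size_ts : size ts = h by rewrite !size_cat !size_nseq /=; lia.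
have votes x y : rot_votes 3 ts x y =
    (rot_rank 3 0 x < rot_rank 3 0 y) * k + (rot_rank 3 2 x < rot_rank 3 2 y) * k
    + (rot_rank 3 1 x < rot_rank 3 1 y).
  by rewrite !rot_votes_cat !rot_votes_nseq /rot_votes /= addn0 addnA.
exists (rot_profile 3 ts); set p : profile n h := rot_profile 3 ts.
pose a0 : 'I_n := Ordinal (leq_trans (isT : 0 < 3) n3).
pose a1 : 'I_n := Ordinal (leq_trans (isT : 1 < 3) n3).
pose a2 : 'I_n := Ordinal (leq_trans (isT : 2 < 3) n3).
apply/negP => /eqP eqMC.
have : a2 \in Copeland p.
  rewrite inE; apply/forallP => z.
  have score_a2 : copeland_score p a2 = ((n - 3)%:Z)%R.
    by rewrite copeland_score_rot_top //= /rot_beats !votes /= -/k; lia.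
  rewrite score_a2; case: z => -[|[|[|z]]] zn.
  1-3: by rewrite copeland_score_rot_top //= /rot_beats !votes /= -/k; lia.
  by apply: le_trans (copeland_score_rot_bot n3 size_ts _ _) _ => //; lia.
rewrite -eqMC inE => /forallP /(_ a0); apply/negP; rewrite -ltnNge.
apply: leq_ltn_trans (_ : minimax_score p a0 <= k.+1) _.
  by apply: minimax_score_rot_top => // -[|[|[|y]]] //= _ _; rewrite votes /=; lia.
apply: leq_trans _ (rot_votes_le_minimax_score n3 size_ts (y := a1) _) => //.
by rewrite votes /=; lia.
Qed.

Lemma Minimax_neq_Copeland_three_voters n : 4 <= n ->
  exists p : profile n 3, Minimax p != Copeland p.
Proof.
move=> n4; set ts := [:: 0; 3; 2].
have size_ts : size ts = 3 by [].
exists (rot_profile 4 ts); set p : profile n 3 := rot_profile 4 ts.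
pose a0 : 'I_n := Ordinal (leq_trans (isT : 0 < 4) n4).
pose a1 : 'I_n := Ordinal (leq_trans (isT : 1 < 4) n4).
pose a2 : 'I_n := Ordinal (leq_trans (isT : 2 < 4) n4).
apply/negP => /eqP eqMC.
have : a0 \in Minimax p.
  rewrite inE; apply/forallP => z.
  apply: leq_trans (_ : minimax_score p a0 <= 2) _.
    by apply: minimax_score_rot_top => // -[|[|[|[|y]]]].
  case: z => -[|[|[|[|z]]]] zn.
  - exact: leq_trans _ (rot_votes_le_minimax_score n4 size_ts (y := a2) _).
  - exact: leq_trans _ (rot_votes_le_minimax_score n4 size_ts (y := a0) _).
  - exact: leq_trans _ (rot_votes_le_minimax_score n4 size_ts (y := a1) _).
  - exact: leq_trans _ (rot_votes_le_minimax_score n4 size_ts (y := a2) _).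
  - exact: leq_trans _ (minimax_score_rot_bot n4 size_ts _ _).
rewrite eqMC inE => /forallP /(_ a1).
by rewrite !copeland_score_rot_top //= /rot_beats; lia.
Qed.

Lemma exists_Minimax_neq_Copeland n h : 3 <= n -> 2 <= h -> (h, n) != (3, 3) ->
  exists p : profile n h, Minimax p != Copeland p.
Proof.
move=> n3 h2 hn33; have [h3|h3] := eqVneq h 3.
  subst h; apply: Minimax_neq_Copeland_three_voters.
  by rewrite ltn_neqAle n3 andbT; apply: contra hn33 => /eqP <-.
case odd_h: (odd h); last by apply: Minimax_neq_Copeland_even; rewrite ?odd_h //; lia.
apply: Minimax_neq_Copeland_odd => //.
by move: odd_h h3; case: h h2 {hn33} => [|[|[|[|[|h]]]]].
Qed.

Theorem corollary2 (n h : nat) (hn : 2 <= n) (hh : 2 <= h) :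
  (forall p : profile n h, Minimax p = Copeland p) <->
  (n = 2 \/ (h = 3 /\ n = 3)).
Proof.
split=> [MC | [-> | [-> ->]] p]; last first.
- exact: Minimax_eq_Copeland_three.
- exact: Minimax_eq_Copeland_two.
have [-> | n2] := eqVneq n 2; first by left.
have [[-> ->] | hn33] := eqVneq (h, n) (3, 3); first by right.
have [|p /negP[]] := exists_Minimax_neq_Copeland _ hh hn33; last exact/eqP/MC.
by rewrite ltn_neqAle eq_sym n2.
Qed.
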